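(* Let $\Phi:I\to O$ be a linear map. Then $\Phi$ is completely positive if and only if $C_\Phi\in\mathcal{L}(\mathcal{M}_\Phi)$ is a positive operator on the Hilbert $O^{op}$-module $\mathcal{M}_\Phi$, i.e. $\langle \xi, C_\Phi(\xi)\rangle_{O^{op}}\ge 0$ for all $\xi\in\mathcal{M}_\Phi$.
   Context: All Hilbert spaces are finite dimensional and inner products are linear in the second variable. Let $H_{in}=\bigoplus_a H^a_{in}$ and $H_{out}=\bigoplus_b H^b_{out}$ be finite direct sums of finite-dimensional Hilbert spaces, and $I=\bigoplus_a B(H^a_{in})\subseteq B(H_{in})$, $O=\bigoplus_b B(H^b_{out})\subseteq B(H_{out})$. Let $\{e^a_i\}_i$ be an orthonormal basis of $H^a_{in}$ and $e^a_{ij}=\theta_{e^a_i,e^a_j}$ the corresponding matrix units of $B(H^a_{in})$, where $\theta_{\xi,\eta}(\eta')=\langle\eta,\eta'\rangle\xi$. $O^{op}$ denotes the opposite algebra of $O$: same vector space and involution, with product $a*b=ba$; it is a C*-algebra. A (right) Hilbert $A$-module over a C*-algebra $A$ is a right $A$-module with an $A$-valued inner product $\langle\cdot,\cdot\rangle_A$ (positive definite, $\langle x,y\rangle_A=\langle y,x\rangle_A^*$, $A$-linear in the second variable), complete for $\|x\|=\|\langle x,x\rangle_A\|^{1/2}$; $\mathcal{L}(\mathcal{M})$ denotes the adjointable $A$-linear operators. Let $\mathcal{M}_\Phi=H_{in}\otimes O^{op}$, the right Hilbert $O^{op}$-module with right action $(\xi\otimes a)*x=\xi\otimes(a*x)$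 and inner product $\langle\xi\otimes a,\eta\otimes b\rangle_{O^{op}}=\langle\xi,\eta\rangle\, a^* * b$. For a linear map $\Phi:I\to O$, $C_\Phi\in\mathcal{L}(\mathcal{M}_\Phi)$ is the $O^{op}$-linear operator determined by $C_\Phi(e^a_j\otimes 1)=\sum_i e^a_i\otimes\Phi(e^a_{ji})$, where $\Phi(e^a_{ji})$ is regarded as an element of $O^{op}$ (equivalently, under $\mathcal{L}(\mathcal{M}_\Phi)\cong B(H_{in})\otimes O^{op}$, $C_\Phi=\sum_{i,j,a}e^a_{ij}\otimes\Phi(e^a_{ji})$). *)

(* Finite-dimensional C*-algebras I = (+)_a B(H^a_in),
   O = (+)_b B(H^b_out) over a field of "complex numbers" C
   (any numClosedFieldType, e.g. complex numbers R[i] over a real closed R). *)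
From mathcomp Require Import all_boot all_order all_algebra.
Set Implicit Arguments. Unset Strict Implicit. Unset Printing Implicit Defensive.
Import Order.TTheory GRing.Theory Num.Theory.
Local Open Scope ring_scope.

Section Defs.
Variable C : numClosedFieldType.

Definition mxadj (r s : nat) (A : 'M[C]_(r, s)) : 'M[C]_(s, r) :=
  (map_mx (fun z : C => z^*) A)^T.

(* Input blocks: p blocks, H^a_in = C^(n a); Output blocks: q blocks, H^b_out = C^(m b).
   An element of I = (+)_a B(H^a_in) is a family of matrices, one per block. *)
Definition Ialg (p : nat) (n : 'I_p -> nat) := forall a : 'I_p, 'M[C]_(n a).
Definition Oalg (q : nat) (m : 'I_q -> nat) := forall b : 'I_q, 'M[C]_(m b).

Definition is_linear_map p (n : 'I_p -> nat) q (m : 'I_q -> nat)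
  (Phi : Ialg n -> Oalg m) : Prop :=
  forall (c : C) (x y : Ialg n) (b : 'I_q),
    Phi (fun a => c *: x a + y a) b = c *: Phi x b + Phi y b.

Definition posO q (m : 'I_q -> nat) (x : Oalg m) : Prop :=
  forall v : forall b : 'I_q, 'cV[C]_(m b),
    0 <= \sum_(b < q) (mxadj (v b) *m x b *m v b) 0 0.

Definition posMkI p (n : 'I_p -> nat) (k : nat) (X : 'I_k -> 'I_k -> Ialg n) : Prop :=
  forall v : 'I_k -> forall a : 'I_p, 'cV[C]_(n a),
    0 <= \sum_(i < k) \sum_(j < k) \sum_(a < p)
            (mxadj (v i a) *m X i j a *m v j a) 0 0.

Definition posMkO q (m : 'I_q -> nat) (k : nat) (Y : 'I_k -> 'I_k -> Oalg m) : Prop :=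
  forall v : 'I_k -> forall b : 'I_q, 'cV[C]_(m b),
    0 <= \sum_(i < k) \sum_(j < k) \sum_(b < q)
            (mxadj (v i b) *m Y i j b *m v j b) 0 0.

Definition completely_positive p (n : 'I_p -> nat) q (m : 'I_q -> nat)
  (Phi : Ialg n -> Oalg m) : Prop :=
  forall (k : nat) (X : 'I_k -> 'I_k -> Ialg n),
    posMkI X -> posMkO (fun i j => Phi (X i j)).

(* Matrix unit e^a_{ij} = theta_{e^a_i, e^a_j} of B(H^a_in), viewed in I
   (it sends e^a_j to e^a_i, zero on other blocks). *)
Definition munit p (n : 'I_p -> nat) (a : 'I_p) (i j : 'I_(n a)) : Ialg n :=
  fun a' => \matrix_(r, s) ((a' == a) && (r == i :> nat) && (s == j :> nat))%:R.

(* O^op: same underlying elements and involution, product x * y := y x. *)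
Definition opmul q (m : 'I_q -> nat) (x y : Oalg m) : Oalg m :=
  fun b => y b *m x b.
Definition opstar q (m : 'I_q -> nat) (x : Oalg m) : Oalg m :=
  fun b => mxadj (x b).
Definition opadd q (m : 'I_q -> nat) (x y : Oalg m) : Oalg m :=
  fun b => x b + y b.
Definition opzero q (m : 'I_q -> nat) : Oalg m := fun b => 0.

(* The Hilbert O^op-module M_Phi = H_in (x) O^op: an element
   xi = sum_{a,i} e^a_i (x) xi a i  is given by its coefficients. *)
Definition Mmod p (n : 'I_p -> nat) q (m : 'I_q -> nat) :=
  forall a : 'I_p, 'I_(n a) -> Oalg m.

Definition ipOp p (n : 'I_p -> nat) q (m : 'I_q -> nat)
  (xi eta : Mmod n m) : Oalg m :=
  \big[@opadd q m / opzero m]_(a < p) \big[@opadd q m / opzero m]_(i < n a)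
     opmul (opstar (xi a i)) (eta a i).

(* C_Phi, the O^op-linear operator with C_Phi(e^a_j (x) 1) = sum_i e^a_i (x) Phi(e^a_{ji});
   by O^op-linearity C_Phi(sum_j e^a_j (x) x_j) = sum_i e^a_i (x) sum_j Phi(e^a_{ji}) * x_j. *)
Definition CPhi p (n : 'I_p -> nat) q (m : 'I_q -> nat)
  (Phi : Ialg n -> Oalg m) (xi : Mmod n m) : Mmod n m :=
  fun a i => \big[@opadd q m / opzero m]_(j < n a) opmul (Phi (munit j i)) (xi a j).

(* O^op has the same underlying set and involution as O,
   and its positive elements a^* * a (= a a^* in O) are exactly the positive
   elements of O; we use the operator description of positivity in O. *)
Definition posOop q (m : 'I_q -> nat) (x : Oalg m) : Prop := posO x.

Definition positive_module_op p (n : 'I_p -> nat) q (m : 'I_q -> nat)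
  (T : Mmod n m -> Mmod n m) : Prop :=
  forall xi : Mmod n m, posOop (ipOp xi (T xi)).

End Defs.

From mathcomp Require Import all_boot all_order all_algebra ring.
From Stdlib Require Import FunctionalExtensionality.
Set Implicit Arguments. Unset Strict Implicit. Unset Printing Implicit Defensive.
Import Order.TTheory GRing.Theory Num.Theory.
Local Open Scope ring_scope.

(* Both conditions amount to positivity of the Choi matrices [Phi (e^a_rs)]_(r,s),
   one for each input block a.  Evaluated at a vector v of H_out, <xi, C_Phi xi> is
   the sum over a of the Choi quadratic forms at the vectors xi(a,i)^* v, and any
   family of vectors arises in this way from some xi supported in a single block.
   Complete positivity gives positive Choi matrices by applying id (x) Phi to the
   positive matrix [e^a_rs]_(r,s).  Conversely, each block of a positive X in M_k(I)
   is a Gram matrix sum_l x_l x_l^*, which rewrites the quadratic form of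
   (id (x) Phi)(X) as a sum of Choi quadratic forms. *)

Local Notation form u M w := ((mxadj u *m M *m w) 0 0).

Lemma sum_pair (V : nmodType) (I J : finType) (F : I * J -> V) :
  \sum_t F t = \sum_i \sum_j F (i, j).
Proof. by rewrite pair_bigA; apply: eq_bigr => -[]. Qed.

Section SesquilinearForms.
Variable C : numClosedFieldType.

Lemma mxadjK r s (A : 'M[C]_(r, s)) : mxadj (mxadj A) = A.
Proof. by apply/matrixP => i j; rewrite !mxE conjCK. Qed.

Lemma mxadj_mul r s t (A : 'M[C]_(r, s)) (B : 'M[C]_(s, t)) :
  mxadj (A *m B) = mxadj B *m mxadj A.
Proof. by rewrite /mxadj map_mxM trmx_mul. Qed.

Lemma mxadj_sumZ r s (I : finType) (c : I -> C) (u : I -> 'M[C]_(r, s)) :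
  mxadj (\sum_i c i *: u i) = \sum_i (c i)^* *: mxadj (u i).
Proof.
apply/matrixP => a b; rewrite !mxE !summxE rmorph_sum.
by apply: eq_bigr => i _; rewrite !mxE rmorphM.
Qed.

Lemma formE r (u w : 'cV[C]_r) (M : 'M[C]_r) :
  form u M w = \sum_i \sum_j (u i 0)^* * M i j * w j 0.
Proof.
rewrite mxE; under eq_bigr => j _ do rewrite !mxE big_distrl.
rewrite exchange_big; apply: eq_bigr => i _; apply: eq_bigr => j _.
by rewrite !mxE.
Qed.

Lemma form0v r (M : 'M[C]_r) (w : 'cV[C]_r) : form (0 : 'cV_r) M w = 0.
Proof.
have -> : mxadj (0 : 'cV[C]_r) = 0 by apply/matrixP => i j; rewrite !mxE conjC0.
by rewrite !mul0mx mxE.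
Qed.

Lemma form_summx r (u w : 'cV[C]_r) (J : Type) (s : seq J) (P : pred J)
    (M : J -> 'M[C]_r) :
  form u (\sum_(k <- s | P k) M k) w = \sum_(k <- s | P k) form u (M k) w.
Proof. by rewrite mulmx_sumr mulmx_suml summxE. Qed.

Lemma form_scalemx r (u w : 'cV[C]_r) c (M : 'M[C]_r) :
  form u (c *: M) w = c * form u M w.
Proof. by rewrite -scalemxAr -scalemxAl mxE. Qed.

Lemma form_sumv r (I J : finType) (c : I -> C) (d : J -> C)
    (u : I -> 'cV[C]_r) (w : J -> 'cV[C]_r) (M : 'M[C]_r) :
  form (\sum_i c i *: u i) M (\sum_j d j *: w j) =
  \sum_i \sum_j (c i)^* * d j * form (u i) M (w j).
Proof.
rewrite mxadj_sumZ mulmx_suml mulmx_suml summxE; apply: eq_bigr => i _.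
rewrite mulmx_sumr summxE; apply: eq_bigr => j _.
by rewrite -!scalemxAl -scalemxAr !mxE mulrA.
Qed.

Lemma form_delta_mx r (u w : 'cV[C]_r) (i j : 'I_r) :
  form u (delta_mx i j) w = (u i 0)^* * w j 0.
Proof.
rewrite formE (bigD1 i) //= [X in _ + X]big1 ?addr0 => [|k /negbTE nki]; last first.
  by rewrite big1 // => l _; rewrite mxE nki mulr0 mul0r.
rewrite (bigD1 j) //= [X in _ + X]big1 ?addr0 => [|l /negbTE nlj]; last first.
  by rewrite mxE nlj andbF mulr0 mul0r.
by rewrite mxE !eqxx mulr1.
Qed.

Lemma mxadj_delta r (k : 'I_r) : mxadj (delta_mx k 0 : 'cV[C]_r) = delta_mx 0 k.
Proof. by apply/matrixP => a b; rewrite !mxE rmorph_nat andbC. Qed.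

Lemma form_delta r (A : 'M[C]_r) (k l : 'I_r) :
  form (delta_mx k 0 : 'cV_r) A (delta_mx l 0 : 'cV_r) = A k l.
Proof. by rewrite mxadj_delta -rowE -colE !mxE. Qed.

Definition e0 r : 'cV[C]_r := \col_i (i == 0 :> nat)%:R.

Lemma mxadj_e0_mulK r (u : 'cV[C]_r) : mxadj (e0 r *m mxadj u) *m e0 r = u.
Proof.
rewrite mxadj_mul mxadjK -mulmxA.
case: r u => [|r] u; first by rewrite [u]flatmx0 [LHS]flatmx0.
suff -> : mxadj (e0 r.+1) *m e0 r.+1 = 1%:M by rewrite mulmx1.
apply/matrixP => i j; rewrite !ord1 !mxE (bigD1 0) //= big1 => [|k nk0].
  by rewrite !mxE rmorph1 mulr1 addr0.
by rewrite !mxE -[(k == 0 :> nat)]/(k == 0) (negbTE nk0) rmorph0 mul0r.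
Qed.

End SesquilinearForms.

Arguments e0 {C} r.

Section PositiveSemidefinite.
Variable C : numClosedFieldType.
Local Open Scope sesquilinear_scope.

Lemma conjC_eq_of_real (a b : C) :
  a + b \is Num.real -> 'i * (a - b) \is Num.real -> b = a^*.
Proof.
rewrite !CrealE rmorphD rmorphM rmorphB /= => /eqP e1 /eqP e2.
have e3 : b^* - a^* = a - b.
  move: e2; rewrite conjCi mulNr -mulrN => /(mulfI (neq0Ci C)).
  by rewrite opprB.
have : (b^* - a) *+ 2 == 0.
  apply/eqP; transitivity ((a^* + b^* - (a + b)) + (b^* - a^* - (a - b))).
    by rewrite mulr2n; ring.
  by rewrite e1 e3 !subrr addr0.
by rewrite mulrn_eq0 subr_eq0 => /eqP <-; rewrite conjCK.
Qed.

Lemma psd_hermitian r (A : 'M[C]_r) :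
  (forall u : 'cV_r, 0 <= form u A u) -> forall i j, A j i = (A i j)^*.
Proof.
move=> psdA i j; pose e k : 'cV[C]_r := delta_mx k 0.
have real_entry k : A k k \is Num.real by rewrite -form_delta ger0_real.
have cross (c : C) : c * A i j + c^* * A j i \is Num.real.
  (* [u] is [e i + c *: e j], written as a sum over [bool] for [form_sumv]. *)
  pose u := \sum_(k : bool) (if k then 1 else c) *: (if k then e i else e j).
  have := ger0_real (psdA u).
  rewrite form_sumv !big_bool /= !form_delta conjC1 !mul1r !mulr1 => real_form.
  have -> : c * A i j + c^* * A j i =
      A i i + c * A i j + (c^* * A j i + c^* * c * A j j) - A i i - c^* * c * A j j.
    by ring.
  by rewrite !rpredB // rpredM // ger0_real // mulrC mul_conjC_ge0.
apply: conjC_eq_of_real; first by have := cross 1; rewrite conjC1 !mul1r.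
by have := cross 'i; rewrite conjCi mulNr -mulrBr.
Qed.

Lemma psd_gram_mx r (A : 'M[C]_r) :
  (forall u : 'cV_r, 0 <= form u A u) ->
  {x : 'I_r -> 'I_r -> C | forall i j, A i j = \sum_l x l i * (x l j)^*}.
Proof.
move=> psdA.
have /hermitian_normalmx/orthomx_spectralP A_eq : A \is hermsymmx.
  apply/is_hermitianmxP; rewrite expr0 scale1r; apply/matrixP => i j.
  by rewrite !mxE (psd_hermitian psdA).
set P := spectralmx A in A_eq; set d := spectral_diag A in A_eq.
have P_unitary : P \is unitarymx by apply: spectral_unitarymx.
rewrite invmx_unitary // in A_eq.
have PPt : P *m P ^t* = 1%:M by apply/unitarymxP.
have d_ge0 l : 0 <= d 0 l.
  have <- : (P *m A *m P ^t*) l l = d 0 l.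
    by rewrite A_eq !mulmxA PPt mul1mx -mulmxA PPt mulmx1 mxE eqxx mulr1n.
  suff -> : (P *m A *m P ^t*) l l = form (col l (P ^t*)) A (col l (P ^t*)).
    exact: psdA.
  have -> : mxadj (col l (P ^t*)) = row l P.
    by apply/matrixP => a b; rewrite !mxE conjCK.
  by rewrite -row_mul !mxE; apply: eq_bigr => k _; rewrite !mxE.
exists (fun l i => sqrtC (d 0 l) * (P l i)^*) => i j.
rewrite A_eq mul_mx_diag !mxE; apply: eq_bigr => l _.
have sqrt_real : (sqrtC (d 0 l))^* = sqrtC (d 0 l).
  by rewrite conj_Creal // ger0_real // sqrtC_ge0.
rewrite !mxE rmorphM /= conjCK sqrt_real -{1}[d 0 l]sqrtCK expr2; ring.
Qed.

Lemma sum_enum_val (T : finType) (F : T -> C) :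
  \sum_t F t = \sum_(i < #|T|) F (enum_val i).
Proof. by rewrite (reindex _ (onW_bij _ (enum_val_bij T))). Qed.

Lemma psd_gram (T : finType) (K : T -> T -> C) :
  (forall u : T -> C, 0 <= \sum_t \sum_t' (u t)^* * K t t' * u t') ->
  {x : 'I_#|T| -> T -> C | forall t t', K t t' = \sum_l x l t * (x l t')^*}.
Proof.
move=> psdK; pose A := \matrix_(i, j) K (enum_val i) (enum_val j) : 'M[C]_#|T|.
have /psd_gram_mx[x xP] : forall u : 'cV_#|T|, 0 <= form u A u.
  move=> u.
  suff -> : form u A u =
      \sum_t \sum_t' (u (enum_rank t) 0)^* * K t t' * u (enum_rank t') 0.
    exact: psdK.
  rewrite formE [RHS]sum_enum_val; apply: eq_bigr => i _.
  by rewrite [RHS]sum_enum_val; apply: eq_bigr => j _; rewrite mxE !enum_valK.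
by exists (fun l t => x l (enum_rank t)) => t t'; rewrite -xP mxE !enum_rankK.
Qed.

End PositiveSemidefinite.

Section Blocks.
Variables (C : numClosedFieldType) (I : finType) (N : I -> nat).

(* [insub] moves an index of ['I_(N a)] to ['I_(N a0)] without casting along [a = a0]. *)
Definition in_block (V : zmodType) a0 (g : 'I_(N a0) -> V) a (i : 'I_(N a)) : V :=
  if a == a0 then (if insub (val i) is Some j then g j else 0) else 0.

Lemma in_block_id (V : zmodType) a0 (g : 'I_(N a0) -> V) i : in_block g i = g i.
Proof. by rewrite /in_block eqxx valK. Qed.

Lemma in_block_other (V : zmodType) a0 (g : 'I_(N a0) -> V) a (i : 'I_(N a)) :
  a != a0 -> in_block g i = 0.
Proof. by rewrite /in_block => /negbTE ->. Qed.

Definition block_cV a0 (u : 'cV[C]_(N a0)) a : 'cV[C]_(N a) :=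
  \col_i in_block (fun j => u j 0) i.

Lemma block_cV_id a0 (u : 'cV[C]_(N a0)) : block_cV u a0 = u.
Proof. by apply/matrixP => i j; rewrite mxE in_block_id ord1. Qed.

Lemma block_cV_other a0 (u : 'cV[C]_(N a0)) a : a != a0 -> block_cV u a = 0.
Proof. by move=> neq; apply/matrixP => i j; rewrite !mxE in_block_other. Qed.

Lemma sum_form_block_cV a0 (u w : 'cV[C]_(N a0)) (M : forall a, 'M[C]_(N a)) :
  \sum_a form (block_cV u a) (M a) (block_cV w a) = form u (M a0) w.
Proof.
rewrite (bigD1 a0) //= !block_cV_id big1 ?addr0 // => a neq.
by rewrite block_cV_other // form0v.
Qed.

End Blocks.

Section Algebras.
Variables (C : numClosedFieldType) (p : nat) (n : 'I_p -> nat) (q : nat) (m : 'I_q -> nat).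

Lemma big_opadd_apply (J : Type) (r : seq J) (P : pred J) (F : J -> Oalg C m) b :
  (\big[@opadd C q m / opzero C m]_(j <- r | P j) F j) b = \sum_(j <- r | P j) F j b.
Proof. by apply: (big_morph (fun x : Oalg C m => x b) (id1 := 0) (op1 := +%R)). Qed.

Lemma munit_id a (i j : 'I_(n a)) : munit C i j a = delta_mx i j.
Proof. by apply/matrixP => r s; rewrite !mxE eqxx. Qed.

Lemma munit_other a (i j : 'I_(n a)) a' : a' != a -> munit C i j a' = 0.
Proof. by move=> /negbTE neq; apply/matrixP => r s; rewrite !mxE neq. Qed.

Lemma Ialg_sum_munit (x : Ialg C n) :
  x = fun a => \sum_(a' < p) \sum_(r < n a') \sum_(s < n a') x a' r s *: munit C r s a.
Proof.
apply: functional_extensionality_dep => a.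
rewrite (bigD1 a) //= [X in _ + X]big1 ?addr0 => [|a' neq].
  rewrite {1}[x a]matrix_sum_delta.
  by under [RHS]eq_bigr do under eq_bigr do rewrite munit_id.
by rewrite big1 // => r _; rewrite big1 // => s _; rewrite munit_other ?scaler0 // eq_sym.
Qed.

Lemma posMkI_munit a : posMkI (fun i j : 'I_(n a) => munit C i j).
Proof.
move=> v.
have form_munit i j :
    \sum_a' form (v i a') (munit C i j a') (v j a') = (v i a i 0)^* * v j a j 0.
  rewrite (bigD1 a) //= munit_id form_delta_mx [X in _ + X]big1 ?addr0 // => a' neq.
  by rewrite munit_other // mulmx0 mul0mx mxE.
under eq_bigr do under eq_bigr do rewrite form_munit.
by rewrite -big_distrlr /= -rmorph_sum mulrC mul_conjC_ge0.
Qed.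

Lemma posMkI_block_psd k (X : 'I_k -> 'I_k -> Ialg C n) : posMkI X ->
  forall a (u : 'I_k * 'I_(n a) -> C),
    0 <= \sum_t \sum_t' (u t)^* * X t.1 t'.1 a t.2 t'.2 * u t'.
Proof.
move=> psdX a u.
have -> : \sum_t \sum_t' (u t)^* * X t.1 t'.1 a t.2 t'.2 * u t' =
    \sum_i \sum_j form (\col_r u (i, r)) (X i j a) (\col_s u (j, s)).
  rewrite sum_pair; apply: eq_bigr => i _; under eq_bigr do rewrite sum_pair.
  rewrite exchange_big; apply: eq_bigr => j _; rewrite formE.
  by apply: eq_bigr => r _; apply: eq_bigr => s _; rewrite !mxE.
have := psdX (fun i => block_cV (\col_r u (i, r))).
by under eq_bigr => i _ do
  under eq_bigr => j _ do rewrite (sum_form_block_cV _ _ (X i j)).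
Qed.

End Algebras.

Section Choi.
Variables (C : numClosedFieldType) (p : nat) (n : 'I_p -> nat) (q : nat) (m : 'I_q -> nat).
Variable Phi : Ialg C n -> Oalg C m.

Definition choi_pair a (r s : 'I_(n a)) (u w : forall b, 'cV[C]_(m b)) : C :=
  \sum_b form (u b) (Phi (munit C r s) b) (w b).

(* The quadratic form of the Choi matrix [Phi (e^a_rs)]_(r,s) of block [a]. *)
Definition choi_form a (w : 'I_(n a) -> forall b, 'cV[C]_(m b)) : C :=
  \sum_r \sum_s choi_pair r s (w r) (w s).

Definition choi_positive :=
  forall a (w : 'I_(n a) -> forall b, 'cV[C]_(m b)), 0 <= choi_form w.

Lemma choi_pair_sumv a (r s : 'I_(n a)) (I J : finType) (c : I -> C) (d : J -> C)
    (u : I -> forall b, 'cV[C]_(m b)) (w : J -> forall b, 'cV[C]_(m b)) :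
  choi_pair r s (fun b => \sum_i c i *: u i b) (fun b => \sum_j d j *: w j b) =
  \sum_i \sum_j (c i)^* * d j * choi_pair r s (u i) (w j).
Proof.
rewrite /choi_pair; under eq_bigr do rewrite form_sumv.
rewrite exchange_big; apply: eq_bigr => i _; rewrite exchange_big.
by apply: eq_bigr => j _; rewrite mulr_sumr.
Qed.

Lemma choi_form_ipOp (xi : Mmod C n m) (v : forall b, 'cV[C]_(m b)) :
  \sum_b form (v b) (ipOp xi (CPhi Phi xi) b) (v b) =
  \sum_a choi_form (fun i b => mxadj (xi a i b) *m v b).
Proof.
have expand b : form (v b) (ipOp xi (CPhi Phi xi) b) (v b) =
    \sum_a \sum_i \sum_j form (mxadj (xi a j b) *m v b) (Phi (munit C j i) b)
                              (mxadj (xi a i b) *m v b).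
  rewrite /ipOp big_opadd_apply form_summx; apply: eq_bigr => a _.
  rewrite big_opadd_apply form_summx; apply: eq_bigr => i _.
  rewrite /opmul /CPhi big_opadd_apply mulmx_suml form_summx; apply: eq_bigr => j _.
  by rewrite mxadj_mul mxadjK !mulmxA.
under eq_bigr do rewrite expand.
rewrite exchange_big; apply: eq_bigr => a _.
rewrite exchange_big; under eq_bigr do rewrite exchange_big.
by rewrite exchange_big.
Qed.

Lemma choi_positive_module : choi_positive -> positive_module_op (CPhi Phi).
Proof.
by move=> choi_ge0 xi v; rewrite choi_form_ipOp; apply: sumr_ge0 => a _.
Qed.

Lemma module_choi_positive : positive_module_op (CPhi Phi) -> choi_positive.
Proof.
move=> pos a0 w.
pose xi : Mmod C n m := fun a i b => e0 (m b) *m mxadj (in_block (fun j => w j b) i).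
have family a : (fun i b => mxadj (xi a i b) *m e0 (m b)) =
    fun i b => in_block (fun j => w j b) i.
  by do 2!apply: functional_extensionality_dep => ?; rewrite mxadj_e0_mulK.
have := pos xi (fun b => e0 (m b)); rewrite /posOop /posO choi_form_ipOp /=.
under eq_bigr => a _ do rewrite family.
rewrite (bigD1 a0) //= big1 ?addr0 => [|a neq].
  suff -> : (fun i b => in_block (fun j => w j b) i) = w by [].
  by do 2!apply: functional_extensionality_dep => ?; rewrite in_block_id.
rewrite /choi_form big1 // => r _; rewrite big1 // => s _.
by rewrite /choi_pair big1 // => b _; rewrite in_block_other // form0v.
Qed.

Lemma cp_choi_positive : completely_positive Phi -> choi_positive.
Proof. by move=> cp a; apply: cp (@posMkI_munit _ _ _ a). Qed.

Lemma choi_form_gram a k (y : 'I_k * 'I_(n a) -> C)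
    (v : 'I_k -> forall b, 'cV[C]_(m b)) :
  choi_form (fun r b => \sum_i (y (i, r))^* *: v i b) =
  \sum_t \sum_t' y t * (y t')^* * choi_pair t.2 t'.2 (v t.1) (v t'.1).
Proof.
rewrite /choi_form; under eq_bigr do under eq_bigr do rewrite choi_pair_sumv.
under eq_bigr do rewrite exchange_big.
rewrite exchange_big sum_pair; apply: eq_bigr => i _; apply: eq_bigr => r _.
rewrite exchange_big sum_pair; apply: eq_bigr => j _; apply: eq_bigr => s _.
by rewrite conjCK.
Qed.

Section LinearMaps.
Hypothesis Phi_linear : is_linear_map Phi.

Lemma Phi0 b : Phi (fun a => 0) b = 0.
Proof.
have := Phi_linear 1 (fun a => 0) (fun a => 0) b.
have -> : (fun a => 1 *: (0 : 'M[C]_(n a)) + 0) = fun a => 0.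
  by apply: functional_extensionality_dep => a; rewrite scaler0 addr0.
rewrite scale1r => Phi0_double.
by apply: (addrI (Phi (fun a => 0) b)); rewrite addr0 -Phi0_double.
Qed.

Lemma PhiD (x y : Ialg C n) b : Phi (fun a => x a + y a) b = Phi x b + Phi y b.
Proof.
have := Phi_linear 1 x y b.
have -> : (fun a => 1 *: x a + y a) = fun a => x a + y a.
  by apply: functional_extensionality_dep => a; rewrite scale1r.
by rewrite scale1r.
Qed.

Lemma PhiZ c (x : Ialg C n) b : Phi (fun a => c *: x a) b = c *: Phi x b.
Proof.
have := Phi_linear c x (fun a => 0) b.
have -> : (fun a => c *: x a + 0) = fun a => c *: x a.
  by apply: functional_extensionality_dep => a; rewrite addr0.
by rewrite Phi0 addr0.
Qed.

Lemma Phi_sum (J : Type) (r : seq J) (P : pred J) (F : J -> Ialg C n) b :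
  Phi (fun a => \sum_(j <- r | P j) F j a) b = \sum_(j <- r | P j) Phi (F j) b.
Proof.
elim: r => [|j r IHr].
  have -> : (fun a => \sum_(j <- [::] | P j) F j a) = fun a => 0.
    by apply: functional_extensionality_dep => a; rewrite big_nil.
  by rewrite big_nil Phi0.
have -> : (fun a => \sum_(i <- j :: r | P i) F i a) =
    fun a => if P j then F j a + \sum_(i <- r | P i) F i a
             else \sum_(i <- r | P i) F i a.
  by apply: functional_extensionality_dep => a; rewrite big_cons.
by rewrite big_cons; case: (P j); rewrite ?PhiD IHr.
Qed.

Lemma Phi_munit_expand (x : Ialg C n) b :
  Phi x b = \sum_a \sum_r \sum_s x a r s *: Phi (munit C r s) b.
Proof.
rewrite {1}(Ialg_sum_munit x) Phi_sum; apply: eq_bigr => a _.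
rewrite (Phi_sum _ _ (fun r a' => \sum_s x a r s *: munit C r s a')).
apply: eq_bigr => r _; rewrite (Phi_sum _ _ (fun s a' => x a r s *: munit C r s a')).
by apply: eq_bigr => s _; rewrite PhiZ.
Qed.

Lemma pairing_Phi (x : Ialg C n) (u w : forall b, 'cV[C]_(m b)) :
  \sum_b form (u b) (Phi x b) (w b) =
  \sum_a \sum_r \sum_s x a r s * choi_pair r s u w.
Proof.
under eq_bigr do rewrite Phi_munit_expand form_summx.
rewrite exchange_big; apply: eq_bigr => a _; under eq_bigr do rewrite form_summx.
rewrite exchange_big; apply: eq_bigr => r _; under eq_bigr do rewrite form_summx.
rewrite exchange_big; apply: eq_bigr => s _.
by rewrite /choi_pair mulr_sumr; under eq_bigr do rewrite form_scalemx.
Qed.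

Lemma quad_Phi_expand k (X : 'I_k -> 'I_k -> Ialg C n)
    (v : 'I_k -> forall b, 'cV[C]_(m b)) :
  \sum_i \sum_j \sum_b form (v i b) (Phi (X i j) b) (v j b) =
  \sum_a \sum_(t : 'I_k * 'I_(n a)) \sum_(t' : 'I_k * 'I_(n a))
     X t.1 t'.1 a t.2 t'.2 * choi_pair t.2 t'.2 (v t.1) (v t'.1).
Proof.
under eq_bigr do under eq_bigr do rewrite pairing_Phi.
under eq_bigr do rewrite exchange_big.
rewrite exchange_big; apply: eq_bigr => a _.
rewrite sum_pair; apply: eq_bigr => i _; rewrite exchange_big; apply: eq_bigr => r _.
by rewrite sum_pair.
Qed.

Lemma choi_positive_cp : choi_positive -> completely_positive Phi.
Proof.
move=> choi_ge0 k X psdX v; rewrite quad_Phi_expand; apply: sumr_ge0 => a _.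
have [x gramX] := psd_gram (@posMkI_block_psd _ _ _ _ _ psdX a).
have -> : \sum_t \sum_t' X t.1 t'.1 a t.2 t'.2 * choi_pair t.2 t'.2 (v t.1) (v t'.1)
    = \sum_l choi_form (fun r b => \sum_i (x l (i, r))^* *: v i b).
  under [RHS]eq_bigr do rewrite choi_form_gram.
  under [LHS]eq_bigr do under eq_bigr do rewrite gramX big_distrl.
  by under eq_bigr do rewrite exchange_big; rewrite exchange_big.
by apply: sumr_ge0 => l _.
Qed.

End LinearMaps.

End Choi.

Unset Implicit Arguments.

Theorem proposition3p6 (C : numClosedFieldType)
  (p : nat) (n : 'I_p -> nat) (q : nat) (m : 'I_q -> nat)
  (Phi : Ialg C n -> Oalg C m) :
  is_linear_map Phi ->
  (completely_positive Phi <-> positive_module_op (CPhi Phi)).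
Proof.
move=> Phi_linear; split => [cp | pos].
  exact/choi_positive_module/cp_choi_positive.
exact/(choi_positive_cp Phi_linear)/module_choi_positive.
Qed.
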